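(* Let $d\in R$ be nonzero, let $k$ be a positive integer, and let $a_0,a_1,\ldots,a_k$ be a $d$-sequence of length $k$ for $S$. Let $f'\in\mathbb{K}[x]$ be a polynomial of degree $k'\le k$ that can be written as $f'=\tfrac{g'}{d'}$ with $g'\in R[x]$ and $d'\in R$ a nonzero divisor of $d$. Then $$f'\in\mathrm{Int}(S,R)\iff f'(a_i)\in R\ \text{ for all } 0\le i\le k'.$$
   Context: Let $R$ be a unique factorization domain with field of fractions $\mathbb{K}$, and let $S\subseteq R$ be a nonempty subset. Define $\mathrm{Int}(S,R)=\{f\in\mathbb{K}[x]: f(a)\in R \text{ for all } a\in S\}$. For an irreducible $\pi\in R$, $R_{(\pi)}$ denotes the localization of $R$ at the prime ideal $(\pi)$, $\mathrm{Int}(S,R_{(\pi)})=\{f\in\mathbb{K}[x]: f(a)\in R_{(\pi)} \text{ for all } a\in S\}$, and $v_\pi$ denotes the $\pi$-adic valuation. $\pi$-sequence: for an irreducible $\pi\in R$ and a positive integer $k$, a $\pi$-sequence of length $k$ in $S$ is a sequence $u_0,u_1,\ldots,u_k$ of distinct elements of $S$ such that for every $1\le m\le k$, $$\frac{(x-u_0)(x-u_1)\cdots(x-u_{m-1})}{(u_m-u_0)(u_m-u_1)\cdots(u_m-u_{m-1})}\in\mathrm{Int}(S,R_{(\pi)}).$$ $d$-sequence: let $d\in R$ be nonzero and $k$ a positive integer. Let $\pi_1,\ldots,\pi_r$ be a complete list of pairwise non-associate irreducible elements of $R$ dividing $d$. For each $1\le j\le r$ choose a $\pi_j$-sequence $u_{0j},u_{1j},\ldots,u_{kj}$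 of length $k$ in $S$, and let $e_j=v_{\pi_j}\big((u_{kj}-u_{0j})(u_{kj}-u_{1j})\cdots(u_{kj}-u_{k-1,j})\big)$. A $d$-sequence of length $k$ (for $S$) is any sequence $a_0,a_1,\ldots,a_k$ of elements of $R$ satisfying $$a_i\equiv u_{ij}\pmod{\pi_j^{e_j+1}}\quad\text{for all } 0\le i\le k,\ 1\le j\le r.$$ (Such sequences exist by the Chinese remainder theorem; they depend on the choices made, and the $a_i$ need not lie in $S$.) *)

From HB Require Import structures.
From mathcomp Require Import all_boot all_order all_algebra.
Set Implicit Arguments. Unset Strict Implicit. Unset Printing Implicit Defensive.
Import Order.TTheory GRing.Theory Num.Theory.
Local Open Scope ring_scope.

Definition toK (R : idomainType) (x : R) : {fraction R} := @FracField.tofrac R x.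

Definition dvdR (R : idomainType) (a b : R) : Prop := exists c : R, b = a * c.

Definition assocR (R : idomainType) (a b : R) : Prop :=
  exists u : R, u \is a GRing.unit /\ b = u * a.

Definition irredR (R : idomainType) (p : R) : Prop :=
  p != 0 /\ p \isn't a GRing.unit /\
  forall a b : R, p = a * b -> a \is a GRing.unit \/ b \is a GRing.unit.

Definition is_UFD (R : idomainType) : Prop :=
  (forall a : R, a != 0 -> a \isn't a GRing.unit ->
     exists s : seq R, (forall p, p \in s -> irredR p) /\ a = \prod_(p <- s) p)
  /\
  (forall s t : seq R,
     (forall p, p \in s -> irredR p) -> (forall p, p \in t -> irredR p) ->
     \prod_(p <- s) p = \prod_(p <- t) p ->
     size s = size t /\
     exists2 t' : seq R, perm_eq t t' &
       forall i, (i < size s)%N -> assocR s`_i t'`_i).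

Definition inR (R : idomainType) (x : {fraction R}) : Prop :=
  exists r : R, x = toK r.

Definition inRloc (R : idomainType) (pi : R) (x : {fraction R}) : Prop :=
  exists a b : R, ~ dvdR pi b /\ x = toK a / toK b.

Definition IntSR (R : idomainType) (S : {pred R}) (f : {poly {fraction R}}) : Prop :=
  forall a : R, a \in S -> inR f.[toK a].

Definition IntSRloc (R : idomainType) (S : {pred R}) (pi : R)
  (f : {poly {fraction R}}) : Prop :=
  forall a : R, a \in S -> inRloc pi f.[toK a].

Definition is_val (R : idomainType) (pi a : R) (e : nat) : Prop :=
  dvdR (pi ^+ e) a /\ ~ dvdR (pi ^+ e.+1) a.

Definition seq_poly (R : idomainType) (u : nat -> R) (m : nat) : {poly {fraction R}} :=
  (\prod_(i < m) ('X - (toK (u i))%:P)) *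
  ((\prod_(i < m) toK (u m - u i))^-1)%:P.

Definition is_piseq (R : idomainType) (S : {pred R}) (pi : R) (k : nat)
  (u : nat -> R) : Prop :=
  (forall i, (i <= k)%N -> u i \in S) /\
  (forall i j, (i <= k)%N -> (j <= k)%N -> u i = u j -> i = j) /\
  (forall m, (1 <= m <= k)%N -> IntSRloc S pi (seq_poly u m)).

Definition prime_divisor_list (R : idomainType) (d : R) (ps : seq R) : Prop :=
  (forall j, (j < size ps)%N -> irredR ps`_j /\ dvdR ps`_j d) /\
  (forall j j', (j < size ps)%N -> (j' < size ps)%N -> j <> j' ->
     ~ assocR ps`_j ps`_j') /\
  (forall p, irredR p -> dvdR p d -> exists2 j, (j < size ps)%N & assocR ps`_j p).

Definition is_dseq (R : idomainType) (S : {pred R}) (d : R) (k : nat)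
  (a : nat -> R) : Prop :=
  exists ps : seq R, prime_divisor_list d ps /\
  exists (u : nat -> nat -> R) (e : nat -> nat),
    forall j, (j < size ps)%N ->
      is_piseq S ps`_j k (u j) /\
      is_val ps`_j (\prod_(i < k) (u j k - u j i)) (e j) /\
      (forall i, (i <= k)%N -> dvdR (ps`_j ^+ (e j).+1) (a i - u j i)).

From HB Require Import structures.
From mathcomp Require Import all_boot all_order all_algebra.
From mathcomp Require Import ring.
From Stdlib Require Import Classical.
Set Implicit Arguments. Unset Strict Implicit. Unset Printing Implicit Defensive.
Import Order.TTheory GRing.Theory Num.Theory.
Local Open Scope ring_scope.

(* Local step, for an irreducible p | d with p-sequence u, where
   e = v_p(D_k) and a_i ≡ u_i mod p^(e+1).  Write f' = Σ c_m P_m in the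
   Newton basis P_m = (x - u_0)...(x - u_(m-1)) / D_m, with
   D_m = (u_m - u_0)...(u_m - u_(m-1)).  As P_m(u_i) is 0 for i < m and 1 for
   i = m, f' ∈ Int(S,R_(p)) iff every c_m ∈ R_(p).  Since
   D_k / D_m = P_m(u_k) (u_k - u_m)...(u_k - u_(k-1)) ∈ R_(p), we get
   P_m(a_i) ≡ P_m(u_i) mod p R_(p): the matrix (P_m(a_i)) is unitriangular
   modulo p.  Hence c_m ∈ R_(p) gives f'(a_i) ∈ R_(p), and conversely, after
   clearing the denominator d' one irreducible factor at a time.
   Global step: y/d' with d' | d lies in R once it lies in every R_(p), p | d. *)

HB.instance Definition _ (R : idomainType) :=
  GRing.RMorphism.copy (@toK R) (@FracField.tofrac R).

Lemma toK_inj (R : idomainType) : injective (@toK R).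
Proof. by move=> x y /eqP; rewrite /toK tofrac_eq => /eqP. Qed.

Lemma toK_neq0 (R : idomainType) (x : R) : x != 0 -> toK x != 0.
Proof. by rewrite (raddf_eq0 _ (@toK_inj R)). Qed.

Section Divisibility.
Variable R : idomainType.
Implicit Types a b c v : R.

Lemma dvdR_refl a : dvdR a a.
Proof. by exists 1; rewrite mulr1. Qed.

Lemma dvdR_trans a b c : dvdR a b -> dvdR b c -> dvdR a c.
Proof. by move=> [x ->] [y ->]; exists (x * y); rewrite mulrA. Qed.

Lemma dvdR_mulr a b c : dvdR a b -> dvdR a (b * c).
Proof. by move=> [x ->]; exists (x * c); rewrite mulrA. Qed.

Lemma dvdR_mull a b c : dvdR a b -> dvdR a (c * b).
Proof. by rewrite mulrC; apply: dvdR_mulr. Qed.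

Lemma dvdR0 a : dvdR a 0.
Proof. by exists 0; rewrite mulr0. Qed.

Lemma dvdR_add a b c : dvdR a b -> dvdR a c -> dvdR a (b + c).
Proof. by move=> [x ->] [y ->]; exists (x + y); rewrite mulrDr. Qed.

Lemma dvdR_unit a b : b \is a GRing.unit -> dvdR a b -> a \is a GRing.unit.
Proof. by move=> Hb [x Ex]; move: Hb; rewrite Ex unitrM => /andP []. Qed.

Lemma dvdR_mulUr a b v : v \is a GRing.unit -> dvdR a (b * v) -> dvdR a b.
Proof. by move=> Hv [c E]; exists (c * v^-1); rewrite mulrA -E mulrK. Qed.

Lemma dvdR_prod (s : seq R) a : a \in s -> dvdR a (\prod_(b <- s) b).
Proof.
elim: s => // b s IH; rewrite inE big_cons => /orP [/eqP -> | /IH].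
  exact/dvdR_mulr/dvdR_refl.
exact: dvdR_mull.
Qed.

Lemma irred_neq0 a : irredR a -> a != 0.
Proof. by case. Qed.

Lemma irred_nunit a : irredR a -> a \isn't a GRing.unit.
Proof. by case=> _ []. Qed.

Lemma irred_mulU a v : irredR a -> v \is a GRing.unit -> irredR (a * v).
Proof.
move=> [a0 [au Ha]] Hv; split.
  by rewrite mulf_neq0 //; apply: contraTneq Hv => ->; rewrite unitr0.
split; first by rewrite unitrMl.
move=> x y E; have /Ha [-> | Hy] : a = x * (y * v^-1) by rewrite mulrA -E mulrK.
  by left.
by right; move: Hy; rewrite unitrMl // unitrV.
Qed.

End Divisibility.

Section Factorization.
Variables (R : idomainType) (HUFD : is_UFD R).

Lemma ufd_fact (x : R) : x != 0 -> exists v s, v \is a GRing.unit /\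
  (forall q, q \in s -> irredR q) /\ x = v * \prod_(q <- s) q.
Proof.
move=> x0; have [Hx | Hx] := boolP (x \is a GRing.unit).
  by exists x, [::]; rewrite big_nil mulr1.
have [s [Hs E]] := HUFD.1 x x0 Hx.
by exists 1, s; rewrite mul1r unitr1.
Qed.

Lemma ufd_ind (P : R -> Prop) :
  (forall v, v \is a GRing.unit -> P v) ->
  (forall q x, irredR q -> x != 0 -> P x -> P (q * x)) ->
  forall x, x != 0 -> P x.
Proof.
move=> Punit Pstep x x0; have [v [s [Hv [Hs Ex]]]] := ufd_fact x0.
rewrite Ex {x Ex} in x0 *; elim: s Hs x0 => [|q s IH] Hs x0.
  by rewrite big_nil mulr1; apply: Punit.
have Hs' r : r \in s -> irredR r by move=> Hr; apply: Hs; rewrite inE Hr orbT.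
rewrite big_cons mulrCA in x0 *; move: (x0); rewrite mulf_eq0 negb_or => /andP [_ x1].
exact: (Pstep _ _ (Hs q (mem_head q s)) x1 (IH Hs' x1)).
Qed.

Lemma irred_dvd_factor (v w q : R) (s t : seq R) :
  v \is a GRing.unit -> w \is a GRing.unit ->
  (forall r, r \in s -> irredR r) -> (forall r, r \in t -> irredR r) ->
  v * \prod_(r <- s) r = w * \prod_(r <- t) r ->
  q \in t -> exists2 r, r \in s & dvdR q r.
Proof.
move=> Hv Hw Hs Ht E Hq.
case: s Hs E => [|x s] Hs E.
  have : dvdR q (w * \prod_(r <- t) r) by exact/dvdR_mull/dvdR_prod.
  rewrite -E big_nil mulr1 => /(dvdR_unit Hv) Hqu.
  by have /negP := irred_nunit (Ht q Hq).
case: t Ht E Hq => [//|y t] Ht E Hq.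
(* absorb the units into the first factors to apply the uniqueness axiom *)
pose s' := x * v :: s; pose t' := y * w :: t.
have irred_cons (z : R) (l : seq R) (Hl : forall r, r \in z :: l -> irredR r) c :
    c \is a GRing.unit -> forall r, r \in z * c :: l -> irredR r.
  move=> Hc r; rewrite inE => /orP [/eqP -> | Hr].
    by apply: irred_mulU => //; apply: Hl; exact: mem_head.
  by apply: Hl; rewrite inE Hr orbT.
have E' : \prod_(r <- s') r = \prod_(r <- t') r.
  by move: E; rewrite !big_cons -!mulrA (mulrCA v) (mulrCA w).
have [Hsize [t'' Hperm Hassoc]] :=
  HUFD.2 s' t' (irred_cons _ _ Hs _ Hv) (irred_cons _ _ Ht _ Hw) E'.
have [r' Hr' Hqr'] : exists2 r', r' \in t' & dvdR q r'.
  move: Hq; rewrite inE => /orP [/eqP -> | Hq].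
    by exists (y * w); [exact: mem_head | exact/dvdR_mulr/dvdR_refl].
  by exists q; [rewrite inE Hq orbT | exact: dvdR_refl].
have Hr'' : r' \in t'' by rewrite -(perm_mem Hperm).
have Hi : (index r' t'' < size s')%N by rewrite Hsize (perm_size Hperm) index_mem.
have [z [Hz Ez]] := Hassoc _ Hi; rewrite nth_index // in Ez.
have [r Hr Hqr] : exists2 r, r \in s' & dvdR q r.
  exists s'`_(index r' t''); first exact: mem_nth.
  by apply: dvdR_trans Hqr' _; exists z^-1; rewrite [in RHS]Ez mulrC mulKr.
move: Hr; rewrite inE => /orP [/eqP Ex | Hr].
  by exists x; [exact: mem_head | apply: (dvdR_mulUr Hv); rewrite -Ex].
by exists r; rewrite ?inE ?Hr ?orbT.
Qed.

Lemma irred_prime (p x y : R) :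
  irredR p -> dvdR p (x * y) -> dvdR p x \/ dvdR p y.
Proof.
move=> Hp [z E].
have [-> | x0] := eqVneq x 0; first by left; exact: dvdR0.
have [-> | y0] := eqVneq y 0; first by right; exact: dvdR0.
have z0 : z != 0 by apply: contraNneq (mulf_neq0 x0 y0) => z0; rewrite E z0 mulr0.
have [u [sx [Hu [Hsx Ex]]]] := ufd_fact x0.
have [v [sy [Hv [Hsy Ey]]]] := ufd_fact y0.
have [w [sz [Hw [Hsz Ez]]]] := ufd_fact z0.
have Hs r : r \in sx ++ sy -> irredR r by rewrite mem_cat => /orP [/Hsx | /Hsy].
have Ht r : r \in p :: sz -> irredR r by rewrite inE => /orP [/eqP -> | /Hsz].
have E' : (u * v) * \prod_(r <- sx ++ sy) r = w * \prod_(r <- p :: sz) r.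
  transitivity (x * y); first by rewrite Ex Ey big_cat mulrACA.
  by rewrite E Ez big_cons mulrCA.
have Huv : u * v \is a GRing.unit by rewrite unitrM Hu Hv.
have [r Hr Hpr] := irred_dvd_factor Huv Hw Hs Ht E' (mem_head p sz).
move: Hr; rewrite mem_cat => /orP [Hr | Hr]; [left | right]; apply: (dvdR_trans Hpr).
  by rewrite Ex; exact/dvdR_mull/dvdR_prod.
by rewrite Ey; exact/dvdR_mull/dvdR_prod.
Qed.

End Factorization.

Section Localization.
Variables (R : idomainType) (HUFD : is_UFD R) (p : R).
Hypothesis Hp : irredR p.
Local Notation loc := (inRloc p).

Lemma ndvd1 : ~ dvdR p 1.
Proof. by move=> /(dvdR_unit (unitr1 R)); apply/negP; apply: irred_nunit. Qed.

Lemma ndvdM b b' : ~ dvdR p b -> ~ dvdR p b' -> ~ dvdR p (b * b').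
Proof. by move=> Hb Hb' /(irred_prime HUFD Hp) []. Qed.

Lemma ndvd_toK_neq0 b : ~ dvdR p b -> toK b != 0.
Proof.
by move=> Hb; apply: toK_neq0; apply: contra_notN Hb => /eqP ->; exact: dvdR0.
Qed.

Lemma loc_toK r : loc (toK r).
Proof. by exists r, 1; split; [exact: ndvd1 | rewrite rmorph1 divr1]. Qed.

Lemma loc_inv b : ~ dvdR p b -> loc (toK b)^-1.
Proof. by move=> Hb; exists 1, b; rewrite rmorph1 mul1r. Qed.

Lemma loc0 : loc 0.
Proof. by rewrite -(rmorph0 (@toK R)); exact: loc_toK. Qed.

Lemma loc_add x y : loc x -> loc y -> loc (x + y).
Proof.
move=> [a [b [Hb ->]]] [a' [b' [Hb' ->]]].
exists (a * b' + a' * b), (b * b'); split; first exact: ndvdM.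
by rewrite rmorphD !rmorphM addf_div ?ndvd_toK_neq0.
Qed.

Lemma loc_opp x : loc x -> loc (- x).
Proof. by move=> [a [b [Hb ->]]]; exists (- a), b; rewrite rmorphN mulNr. Qed.

Lemma loc_mul x y : loc x -> loc y -> loc (x * y).
Proof.
move=> [a [b [Hb ->]]] [a' [b' [Hb' ->]]].
by exists (a * a'), (b * b'); split; [exact: ndvdM | rewrite !rmorphM mulf_div].
Qed.

Lemma loc_sum (I : Type) (r : seq I) (P : pred I) (F : I -> {fraction R}) :
  (forall i, P i -> loc (F i)) -> loc (\sum_(i <- r | P i) F i).
Proof. by move=> HF; apply: big_ind => //; [exact: loc0 | exact: loc_add]. Qed.

Definition in_maxideal (x : {fraction R}) : Prop := exists2 y, loc y & x = toK p * y.

Lemma maxideal_loc x : in_maxideal x -> loc x.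
Proof. by move=> [y Hy ->]; apply: loc_mul => //; exact: loc_toK. Qed.

Lemma maxideal0 : in_maxideal 0.
Proof. by exists 0; [exact: loc0 | rewrite mulr0]. Qed.

Lemma maxideal_add x y : in_maxideal x -> in_maxideal y -> in_maxideal (x + y).
Proof.
by move=> [a Ha ->] [b Hb ->]; exists (a + b); [exact: loc_add | rewrite mulrDr].
Qed.

Lemma maxideal_opp x : in_maxideal x -> in_maxideal (- x).
Proof. by move=> [a Ha ->]; exists (- a); [exact: loc_opp | rewrite mulrN]. Qed.

Lemma maxideal_mulr x y : in_maxideal x -> loc y -> in_maxideal (x * y).
Proof. by move=> [a Ha ->] Hy; exists (a * y); [exact: loc_mul | rewrite mulrA]. Qed.

Lemma maxideal_cancel x : in_maxideal (toK p * x) -> loc x.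
Proof. by move=> [y Hy /(mulfI (toK_neq0 (irred_neq0 Hp))) ->]. Qed.

End Localization.

Lemma unitriangular_solve (T : comNzRingType) (Q L : T -> Prop) :
  Q 0 -> (forall x y, Q x -> Q y -> Q (x + y)) -> (forall x, Q x -> Q (- x)) ->
  (forall x y, Q x -> L y -> Q (x * y)) ->
  forall n (M : nat -> nat -> T) (c : nat -> T),
  (forall i m, (m < i <= n)%N -> L (M i m)) ->
  (forall m, (m <= n)%N -> Q (c m * (M m m - 1))) ->
  (forall i m, (i < m <= n)%N -> Q (c m * M i m)) ->
  (forall i, (i <= n)%N -> Q (\sum_(m < n.+1) c m * M i m)) ->
  forall m, (m <= n)%N -> Q (c m).
Proof.
move=> Q0 QD QN QM n M c Hlow Hdiag Hup Hrow; elim/ltn_ind => m IH Hm.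
have := Hrow m Hm; rewrite (bigD1 (inord m)) //= inordK //.
set r := \sum_(j < n.+1 | _) _ => Hsum.
have Hr : Q r.
  apply: big_ind => // j Hj; have Hjn : (j <= n)%N := ltn_ord j.
  case: (ltngtP j m) => [jm | mj | jm].
  - by apply: QM; [exact: IH | apply: Hlow; rewrite jm Hm].
  - by apply: Hup; rewrite mj Hjn.
  - by move: Hj; rewrite -(inj_eq val_inj) /= inordK ?jm ?eqxx.
have -> : c m = (c m * M m m + r) - c m * (M m m - 1) - r by ring.
by apply: (QD); [apply: (QD) => //; apply: QN; exact: Hdiag | exact: QN].
Qed.

Section NewtonBasis.
Variable R : idomainType.
Local Notation K := {fraction R}.
Implicit Types (u : nat -> R) (m : nat).

Definition newton_den u m : R := \prod_(i < m) (u m - u i).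
Definition newton_num u m (x : R) : R := \prod_(i < m) (x - u i).
Definition newton_monic u m : {poly K} := \prod_(i < m) ('X - (toK (u i))%:P).

Lemma seq_polyE u m :
  seq_poly u m = newton_monic u m * ((toK (newton_den u m))^-1)%:P.
Proof. by rewrite /seq_poly rmorph_prod. Qed.

Lemma horner_seq_poly u m x :
  (seq_poly u m).[toK x] = toK (newton_num u m x) / toK (newton_den u m).
Proof.
rewrite seq_polyE hornerM hornerC horner_prod; congr (_ * _).
by rewrite rmorph_prod; apply: eq_bigr => i _; rewrite hornerXsubC rmorphB.
Qed.

Lemma seq_poly0 u : seq_poly u 0 = 1.
Proof. by rewrite /seq_poly !big_ord0 invr1 mul1r. Qed.

Lemma newton_num_lt u m i : (i < m)%N -> newton_num u m (u i) = 0.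
Proof. by move=> Hi; apply/eqP/prodf_eq0; exists (Ordinal Hi); rewrite ?subrr. Qed.

Lemma size_newton_monic u m : size (newton_monic u m) = m.+1.
Proof.
by rewrite /newton_monic size_prod_XsubC [index_enum _]unlock -enumT size_enum_ord.
Qed.

Lemma newton_num_congr u m (q x y : R) :
  dvdR q (x - y) -> dvdR q (newton_num u m x - newton_num u m y).
Proof.
move=> Hxy; elim: m => [|m IH].
  by rewrite /newton_num !big_ord0 subrr; exact: dvdR0.
rewrite /newton_num !big_ord_recr /= -/(newton_num u m x) -/(newton_num u m y).
set A := newton_num u m x; set B := newton_num u m y.
have -> : A * (x - u m) - B * (y - u m) = (A - B) * (x - u m) + B * (x - y) by ring.
by apply: dvdR_add; [exact: dvdR_mulr | exact: dvdR_mull].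
Qed.

Variables (k : nat) (u : nat -> R).
Hypothesis Hinj : forall i j, (i <= k)%N -> (j <= k)%N -> u i = u j -> i = j.

Lemma newton_den_neq0 m : (m <= k)%N -> newton_den u m != 0.
Proof.
move=> Hm; apply/prodf_neq0 => i _; rewrite subr_eq0; apply/eqP => /Hinj.
move=> /(_ Hm (leq_trans (ltnW (ltn_ord i)) Hm)) Ei.
by move: (ltn_ord i); rewrite -Ei ltnn.
Qed.

Lemma seq_poly_lt m i : (i < m)%N -> (seq_poly u m).[toK (u i)] = 0.
Proof. by move=> Hi; rewrite horner_seq_poly newton_num_lt // rmorph0 mul0r. Qed.

Lemma seq_poly_diag m : (m <= k)%N -> (seq_poly u m).[toK (u m)] = 1.
Proof. by move=> Hm; rewrite horner_seq_poly divff // toK_neq0 // newton_den_neq0. Qed.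

Lemma coef_seq_poly m j : (m <= j)%N -> (m <= k)%N ->
  (seq_poly u m)`_j = if j == m then (toK (newton_den u m))^-1 else 0.
Proof.
move=> Hj Hm; rewrite seq_polyE coefMC.
have Hsize := size_newton_monic u m.
case: eqP => [-> | /eqP jm].
  have /monicP := monic_prod_XsubC (index_enum 'I_m) xpredT (fun i => toK (u i)).
  by rewrite lead_coefE -/(newton_monic u m) Hsize => ->; rewrite mul1r.
by rewrite nth_default ?mul0r // Hsize ltn_neqAle eq_sym jm.
Qed.

Lemma newton_basis n (h : {poly K}) : (n <= k)%N -> (size h <= n.+1)%N ->
  exists c : nat -> K, h = \sum_(m < n.+1) c m *: seq_poly u m.
Proof.
elim: n h => [|n IH] h Hn Hh.
  by exists (fun _ => h`_0); rewrite big_ord1 seq_poly0 alg_polyC; exact: size1_polyC.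
pose c0 := h`_n.+1 * toK (newton_den u n.+1).
have Hsize : (size (h - c0 *: seq_poly u n.+1)%R <= n.+1)%N.
  apply/leq_sizeP => j Hj; rewrite coefB coefZ coef_seq_poly //.
  case: eqP => [-> | /eqP jn].
    by rewrite /c0 mulfK ?subrr ?toK_neq0 ?newton_den_neq0.
  by rewrite mulr0 subr0; move/leq_sizeP: Hh; apply; rewrite ltn_neqAle eq_sym jn.
have [c Ec] := IH _ (ltnW Hn) Hsize.
exists (fun m => if m == n.+1 then c0 else c m).
rewrite big_ord_recr /= eqxx -[h](subrK (c0 *: seq_poly u n.+1)) Ec.
by congr (_ + _); apply: eq_bigr => i _; rewrite ifN // neq_ltn ltn_ord.
Qed.

End NewtonBasis.

Section LocalEquivalence.
Variables (R : idomainType) (HUFD : is_UFD R) (S : {pred R}) (p : R).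
Hypothesis Hp : irredR p.
Variables (k : nat) (u : nat -> R).
Hypothesis Hpi : is_piseq S p k u.
Variable e : nat.
Hypothesis Hval : is_val p (\prod_(i < k) (u k - u i)) e.
Variable a : nat -> R.
Hypothesis Hcong : forall i, (i <= k)%N -> dvdR (p ^+ e.+1) (a i - u i).
Local Notation K := {fraction R}.
Local Notation loc := (inRloc p).
Local Notation P := (seq_poly u).

Let Hinj := Hpi.2.1.

Lemma seq_poly_int m : (m <= k)%N -> IntSRloc S p (P m).
Proof.
case: m => [|m] Hm; last by apply: Hpi.2.2; rewrite Hm.
by move=> s _; rewrite seq_poly0 hornerC -(rmorph1 (@toK R)); exact: (loc_toK Hp).
Qed.

Lemma seq_poly_u_loc m i : (m <= k)%N -> (i <= k)%N -> loc (P m).[toK (u i)].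
Proof. by move=> Hm Hi; apply: seq_poly_int => //; exact: Hpi.1. Qed.

Lemma coeffs_from_u n (c : nat -> K) : (n <= k)%N ->
  (forall i, (i <= n)%N -> loc (\sum_(m < n.+1) c m * (P m).[toK (u i)])) ->
  forall m, (m <= n)%N -> loc (c m).
Proof.
move=> Hn Hrow.
apply: (unitriangular_solve (loc0 Hp) (loc_add HUFD Hp) (@loc_opp _ p)
  (loc_mul HUFD Hp) (M := fun i m => (P m).[toK (u i)])) => //.
- move=> i m /andP [mi Hi]; apply: seq_poly_u_loc; last exact: leq_trans Hi Hn.
  by apply: leq_trans Hn; apply: ltnW; apply: leq_trans mi Hi.
- move=> m Hm; rewrite (seq_poly_diag Hinj (leq_trans Hm Hn)) subrr mulr0.
  exact: (loc0 Hp).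
- by move=> i m /andP [im _]; rewrite seq_poly_lt // mulr0; exact: (loc0 Hp).
Qed.

(* D_k / D_m = P_m(u_k) (u_k - u_m) ... (u_k - u_{k-1}) lies in R_(p). *)
Lemma den_ratio_loc m : (m <= k)%N ->
  loc (toK (newton_den u k) / toK (newton_den u m)).
Proof.
move=> Hm.
have -> : newton_den u k = newton_num u m (u k) * \prod_(m <= i < k) (u k - u i).
  rewrite /newton_den /newton_num -!(big_mkord xpredT (fun i => u k - u i)).
  by rewrite (big_cat_nat (leq0n m) Hm).
rewrite rmorphM mulrAC -horner_seq_poly.
by apply: (loc_mul HUFD Hp); [exact: seq_poly_u_loc | exact: (loc_toK Hp)].
Qed.

(* Hence p^e / D_m ∈ R_(p), because v_p(D_k) = e. *)
Lemma pow_den_loc m : (m <= k)%N -> loc (toK (p ^+ e) / toK (newton_den u m)).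
Proof.
move=> Hm; have [[E HE] Hnd] : is_val p (newton_den u k) e := Hval.
have HEp : ~ dvdR p E.
  by move=> [z Ez]; apply: Hnd; exists z; rewrite HE Ez exprSr mulrA.
have -> : toK (p ^+ e) / toK (newton_den u m)
    = (toK E)^-1 * (toK (newton_den u k) / toK (newton_den u m)).
  by rewrite HE rmorphM -mulrA mulrCA mulKf //; exact: ndvd_toK_neq0 HEp.
by apply: (loc_mul HUFD Hp); [exact: loc_inv | exact: den_ratio_loc].
Qed.

(* Since a_i ≡ u_i mod p^(e+1), P_m(a_i) ≡ P_m(u_i) mod p R_(p). *)
Lemma seq_poly_congr m i : (m <= k)%N -> (i <= k)%N ->
  in_maxideal p ((P m).[toK (a i)] - (P m).[toK (u i)]).
Proof.
move=> Hm Hi; have [w Ew] := newton_num_congr u m (Hcong Hi).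
exists (toK w * (toK (p ^+ e) / toK (newton_den u m))).
  by apply: (loc_mul HUFD Hp); [exact: (loc_toK Hp) | exact: pow_den_loc].
by rewrite !horner_seq_poly -mulrBl -rmorphB Ew exprS !rmorphM; ring.
Qed.

Lemma seq_poly_a_loc m i : (m <= k)%N -> (i <= k)%N -> loc (P m).[toK (a i)].
Proof.
move=> Hm Hi; rewrite -(subrK (P m).[toK (u i)] (P m).[toK (a i)]).
apply: (loc_add HUFD Hp); last exact: seq_poly_u_loc.
exact: (maxideal_loc HUFD Hp (seq_poly_congr Hm Hi)).
Qed.

(* The matrix (P_m(a_i)) is unitriangular modulo p R_(p); so if the values
   at a_0, ..., a_n lie in R_(p) and p c_m ∈ R_(p), then c_m ∈ R_(p). *)
Lemma coeffs_from_a_step n (c : nat -> K) : (n <= k)%N ->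
  (forall m, (m <= n)%N -> loc (toK p * c m)) ->
  (forall i, (i <= n)%N -> loc (\sum_(m < n.+1) c m * (P m).[toK (a i)])) ->
  forall m, (m <= n)%N -> loc (c m).
Proof.
move=> Hn Hpc Hrow m Hm; apply: (maxideal_cancel Hp); move: m Hm.
apply: (unitriangular_solve (maxideal0 Hp) (maxideal_add HUFD Hp)
  (@maxideal_opp _ p) (maxideal_mulr HUFD Hp)
  (M := fun i m => (P m).[toK (a i)]) (c := fun m => toK p * c m)) => //.
- move=> i j /andP [ji Hi]; apply: seq_poly_a_loc; last exact: leq_trans Hi Hn.
  by apply: leq_trans Hn; apply: ltnW; apply: leq_trans ji Hi.
- move=> j Hj; have Hjk := leq_trans Hj Hn.
  rewrite -(seq_poly_diag Hinj Hjk) mulrC.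
  by apply: (maxideal_mulr HUFD Hp); [exact: seq_poly_congr | exact: Hpc].
- move=> i j /andP [ij Hj]; have Hjk := leq_trans Hj Hn.
  rewrite -[(P j).[_]]subr0 -(seq_poly_lt u ij) mulrC.
  apply: (maxideal_mulr HUFD Hp); last exact: Hpc.
  by apply: seq_poly_congr => //; apply: ltnW; exact: leq_trans ij Hjk.
- move=> i Hi; exists (\sum_(j < n.+1) c j * (P j).[toK (a i)]); first exact: Hrow.
  by rewrite mulr_sumr; apply: eq_bigr => j _; rewrite mulrA.
Qed.

(* Clearing a denominator x ≠ 0 of the coefficients, one irreducible factor
   at a time: only the factors associate to p need the previous lemma. *)
Lemma coeffs_from_a n : (n <= k)%N -> forall x : R, x != 0 ->
  forall c : nat -> K, (forall m, (m <= n)%N -> loc (toK x * c m)) ->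
  (forall i, (i <= n)%N -> loc (\sum_(m < n.+1) c m * (P m).[toK (a i)])) ->
  forall m, (m <= n)%N -> loc (c m).
Proof.
move=> Hn; apply: (ufd_ind HUFD) => [v Hv | q x Hq x0 IH] c Hxc Hrow.
  have Hpv : ~ dvdR p v by move=> /(dvdR_unit Hv); apply/negP; exact: irred_nunit.
  move=> m Hm; have -> : c m = (toK v)^-1 * (toK v * c m).
    by rewrite mulrA (mulVf (ndvd_toK_neq0 Hpv)) mul1r.
  by apply: (loc_mul HUFD Hp); [exact: loc_inv | exact: Hxc].
case: (classic (dvdR p q)) => [[w Ew] | Hpq]; last first.
  apply: IH => // j Hj; have -> : toK x * c j = (toK q)^-1 * (toK (q * x) * c j).
    by rewrite rmorphM mulrA (mulKf (ndvd_toK_neq0 Hpq)).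
  by apply: (loc_mul HUFD Hp); [exact: loc_inv | exact: Hxc].
(* q = p w with w a unit: rescale the unknowns by p and use the step lemma. *)
have Hw : w \is a GRing.unit.
  by case: Hq => _ [_ /(_ _ _ Ew) [/negP | //]]; rewrite (negPf (irred_nunit Hp)).
have Hpw : ~ dvdR p w by move=> /(dvdR_unit Hw); apply/negP; exact: irred_nunit.
apply: (coeffs_from_a_step Hn) => //.
apply: (IH (fun j => toK p * c j)) => [j Hj | i Hi].
  have Eqx : q * x = w * (p * x) by rewrite Ew mulrCA mulrA.
  have -> : toK x * (toK p * c j) = (toK w)^-1 * (toK (q * x) * c j).
    rewrite Eqx !rmorphM -mulrA (mulKf (ndvd_toK_neq0 Hpw)).
    by rewrite mulrA (mulrC (toK x)).
  by apply: (loc_mul HUFD Hp); [exact: loc_inv | exact: Hxc].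
rewrite (_ : \sum_(j < n.+1) _ = toK p * \sum_(j < n.+1) c j * (P j).[toK (a i)]).
  by apply: (loc_mul HUFD Hp); [exact: (loc_toK Hp) | exact: Hrow].
by rewrite mulr_sumr; apply: eq_bigr => j _; rewrite mulrA.
Qed.

(* Both sides are
   equivalent to the coefficients of h in the basis P_m lying in R_(p). *)
Lemma local_equiv n (h : {poly K}) (g : {poly R}) (d' : R) :
  (n <= k)%N -> (size h <= n.+1)%N -> d' != 0 ->
  (forall x, h.[toK x] = toK g.[x] / toK d') ->
  IntSRloc S p h <-> (forall i, (i <= n)%N -> loc h.[toK (a i)]).
Proof.
move=> Hn Hh Hd' Hhg; have [c Ec] := newton_basis Hinj Hn Hh.
have Hev t : h.[t] = \sum_(m < n.+1) c m * (P m).[t].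
  by rewrite Ec horner_sum; apply: eq_bigr => m _; rewrite hornerZ.
have eval_loc t : (forall m, (m <= n)%N -> loc (c m)) ->
    (forall m, (m <= n)%N -> loc (P m).[t]) -> loc h.[t].
  move=> Hc HP; rewrite Hev; apply: (loc_sum HUFD Hp) => m _.
  by apply: (loc_mul HUFD Hp); [apply: Hc | apply: HP]; rewrite -ltnS.
split => [Hint i Hi | Ha s Hs].
  apply: eval_loc => [|m Hm]; last first.
    exact: seq_poly_a_loc (leq_trans Hm Hn) (leq_trans Hi Hn).
  apply: (coeffs_from_u Hn) => j Hj; rewrite -Hev; apply: Hint.
  by apply: Hpi.1; exact: leq_trans Hj Hn.
apply: eval_loc => [|m Hm]; last exact: (seq_poly_int (leq_trans Hm Hn) Hs).
apply: (coeffs_from_a Hn Hd') => [|i Hi]; last by rewrite -Hev; exact: Ha.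
apply: (coeffs_from_u Hn (c := fun m => toK d' * c m)) => i Hi.
have -> : \sum_(m < n.+1) toK d' * c m * (P m).[toK (u i)] = toK g.[u i].
  rewrite -[RHS](divfK (toK_neq0 Hd')) -Hhg Hev [RHS]mulrC mulr_sumr.
  by apply: eq_bigr => m _; rewrite mulrA.
exact: (loc_toK Hp).
Qed.

End LocalEquivalence.

(* Each
   irreducible factor q of x is associate to some p_j, and integrality at p_j
   forces p_j | y, so the factor q cancels. *)
Lemma local_global (R : idomainType) (HUFD : is_UFD R) (d : R) (ps : seq R) :
  prime_divisor_list d ps -> forall x : R, x != 0 -> dvdR x d ->
  forall y : R, (forall j, (j < size ps)%N -> inRloc ps`_j (toK y / toK x)) ->
  inR (toK y / toK x).
Proof.
move=> [Hirr [_ Hall]]; apply: (ufd_ind HUFD) => [v Hv | q x Hq x0 IH] Hxd y Hloc.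
  by exists (y * v^-1); rewrite rmorphM rmorphV.
have [j Hj [w [Hw Eq]]] := Hall q Hq (dvdR_trans (dvdR_mulr _ (dvdR_refl q)) Hxd).
have Hpj : irredR ps`_j := (Hirr j Hj).1.
have [y1 Ey] : dvdR ps`_j y.
  have [a' [b [Hb Eab]]] := Hloc j Hj.
  have Hqx : toK (q * x) != 0 by apply: toK_neq0; rewrite mulf_neq0 // irred_neq0.
  move/eqP: Eab; rewrite eqr_div ?(ndvd_toK_neq0 Hb) // -!rmorphM => /eqP /toK_inj Eyb.
  have : dvdR ps`_j (y * b) by exists (a' * w * x); rewrite Eyb Eq; ring.
  by case/(irred_prime HUFD Hpj).
have Eyx : toK y / toK (q * x) = toK (y1 * w^-1) / toK x.
  have cancel_p (F : fieldType) (t z v s : F) : t != 0 -> v != 0 -> s != 0 ->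
      t * z / (v * t * s) = z * v^-1 / s.
    by move=> t0 v0 s0; field; rewrite t0 v0 s0.
  rewrite Ey Eq !rmorphM rmorphV // cancel_p ?toK_neq0 //.
  - exact: irred_neq0.
  - by apply: contraTneq Hw => ->; rewrite unitr0.
rewrite Eyx; apply: IH; first exact: dvdR_trans (dvdR_mull _ (dvdR_refl x)) Hxd.
by move=> j' Hj'; rewrite -Eyx; exact: Hloc.
Qed.

Theorem lemma4p1 (R : idomainType) (HUFD : is_UFD R) (S : {pred R})
  (HS : exists s : R, s \in S) (d : R) (Hd : d != 0) (k : nat) (Hk : (0 < k)%N)
  (a : nat -> R) (Ha : is_dseq S d k a)
  (f' : {poly {fraction R}}) (Hdeg : ((size f').-1 <= k)%N)
  (g' : {poly R}) (d' : R) (Hd' : d' != 0) (Hd'd : dvdR d' d)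
  (Hf' : f' = map_poly (@toK R) g' * ((toK d')^-1)%:P) :
  IntSR S f' <-> (forall i, (i <= (size f').-1)%N -> inR f'.[toK (a i)]).
Proof.
have [ps [Hps [u [e Hu]]]] := Ha.
have Hsize : (size f' <= (size f').-1.+1)%N := leqSpred _.
have Hev x : f'.[toK x] = toK g'.[x] / toK d'.
  by rewrite Hf' hornerM hornerC horner_map.
have Hirr j : (j < size ps)%N -> irredR ps`_j by move=> Hj; have [] := Hps.1 j Hj.
have Hlocal j : (j < size ps)%N -> IntSRloc S ps`_j f' <->
    (forall i, (i <= (size f').-1)%N -> inRloc ps`_j f'.[toK (a i)]).
  move=> Hj; have [Hpi [Hval Hcong]] := Hu j Hj.
  exact: (local_equiv HUFD (Hirr j Hj) Hpi Hval Hcong Hdeg Hsize Hd' Hev).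
have Hglobal x : (forall j, (j < size ps)%N -> inRloc ps`_j f'.[toK x]) ->
    inR f'.[toK x].
  by rewrite !Hev; exact: (local_global HUFD Hps Hd' Hd'd).
have Hloc j z : (j < size ps)%N -> inR z -> inRloc ps`_j z.
  by move=> Hj [r ->]; exact: (loc_toK (Hirr j Hj) r).
split => [Hint i Hi | Hpts s Hs]; apply: Hglobal => j Hj.
  by apply: (Hlocal j Hj).1 => // t Ht; apply: Hloc; last exact: Hint.
by apply: (Hlocal j Hj).2 => // i Hi; apply: Hloc; last exact: Hpts.
Qed.
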